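(* Let $\mathbb{K}\in\{\mathbb{R},\mathbb{C}\}$, let $g\in\mathsf{GL}_d(\mathbb{K})$ and write $g=k_g\exp(\mu(g))k_g'$ with $k_g,k_g'\in\mathsf{K}_d$. Let $x\in\mathbb{P}(\mathbb{K}^d)$ and suppose $0<\delta,r<1$ satisfy $gB_\delta(x)\subset B_r(gx)$. Then \[\frac{\sigma_1}{\sigma_2}(g)\ge\frac{\delta}{4r}\,\mathrm{dist}\big(x,\mathbb{P}((k_g')^{-1}e_1^\perp)\big).\]
   Context: $\mathbb{K}^d$ has the standard (Hermitian) inner product and standard basis $e_1,\dots,e_d$; $\mathsf{K}_d$ is $\mathsf{O}(d)$ or $\mathsf{U}(d)$. $\sigma_1(g)\ge\dots\ge\sigma_d(g)$ are the singular values, $\mu(g)=\mathrm{diag}(\log\sigma_1(g),\dots,\log\sigma_d(g))$, so $g=k_g\exp(\mu(g))k_g'$ is a Cartan (KAK) decomposition. The metric on $\mathbb{P}(\mathbb{K}^d)$ is $d_{\mathbb{P}}([u],[v])=\sqrt{1-\frac{|\langle u,v\rangle|^2}{\|u\|^2\|v\|^2}}$, $B_\delta(x)$ is the open $d_{\mathbb{P}}$-ball, and for subsets $X,Y\subset\mathbb{P}(\mathbb{K}^d)$, $\mathrm{dist}(X,Y)$ is the minimal $d_{\mathbb{P}}$-distance between them. For a unit vector $v$, $v^\perp$ is its orthogonal complement. *)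

(* R is a real closed field (e.g. the reals), K = R or K = R[i]. *)
From HB Require Import structures.
From mathcomp Require Import all_boot all_order all_algebra.
From mathcomp Require Import complex.
Set Implicit Arguments. Unset Strict Implicit. Unset Printing Implicit Defensive.
Import Order.TTheory GRing.Theory Num.Theory.
Local Open Scope ring_scope.

Section RealCase.
Variable R : rcfType.

Definition ipR (d : nat) (u v : 'cV[R]_d) : R := \sum_(i < d) u i 0 * v i 0.

Definition dPR (d : nat) (u v : 'cV[R]_d) : R :=
  Num.sqrt (1 - (ipR u v) ^+ 2 / (ipR u u * ipR v v)).

Definition orthoR (d : nat) (k : 'M[R]_d) : Prop := k^T *m k = 1%:M.

Definition e1R (d : nat) : 'cV[R]_d := \col_(i < d) ((i : nat) == 0%N)%:R.

Definition diagR (d : nat) (s : nat -> R) : 'M[R]_d := diag_mx (\row_(i < d) s i).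

(* m = dist([u], P(k'^{-1} e1^perp)), the minimal d_P-distance from [u] to
   the projective hyperplane {[w] : w <> 0, <k' w, e1> = 0}. *)
Definition is_dist_hypR (d : nat) (k' : 'M[R]_d) (u : 'cV[R]_d) (m : R) : Prop :=
  (exists w : 'cV[R]_d, [/\ w != 0, ipR (k' *m w) (e1R d) = 0 & dPR u w = m]) /\
  (forall w : 'cV[R]_d, w != 0 -> ipR (k' *m w) (e1R d) = 0 -> m <= dPR u w).
End RealCase.

Section ComplexCase.
Variable R : rcfType.

Definition ipC (d : nat) (u v : 'cV[R[i]]_d) : R[i] :=
  \sum_(i < d) u i 0 * conjc (v i 0).

Definition dPC (d : nat) (u v : 'cV[R[i]]_d) : R :=
  Num.sqrt (1 - (ComplexField.Normc.normc (ipC u v)) ^+ 2 / (ComplexField.Normc.normc (ipC u u) * ComplexField.Normc.normc (ipC v v))).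

Definition unitaryC (d : nat) (k : 'M[R[i]]_d) : Prop :=
  (map_mx conjc k)^T *m k = 1%:M.

Definition e1C (d : nat) : 'cV[R[i]]_d := \col_(i < d) ((i : nat) == 0%N)%:R.

Definition diagC (d : nat) (s : nat -> R) : 'M[R[i]]_d :=
  diag_mx (\row_(i < d) real_complex R (s i)).

Definition is_dist_hypC (d : nat) (k' : 'M[R[i]]_d) (u : 'cV[R[i]]_d) (m : R) : Prop :=
  (exists w : 'cV[R[i]]_d, [/\ w != 0, ipC (k' *m w) (e1C d) = 0 & dPC u w = m]) /\
  (forall w : 'cV[R[i]]_d, w != 0 -> ipC (k' *m w) (e1C d) = 0 -> m <= dPC u w).
End ComplexCase.

(* In the frame y = k' u the matrix g acts as D = diag(s), and the hyperplane
   P((k')^-1 e_1^perp) becomes {w : w_1 = 0}, at distance at most |y_1| / |y|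
   from [y] (witness: y with its first coordinate cleared).  Perturb y in its
   second coordinate: w = y + t e_2 with |t| = (delta / 2) |y| and t Re y_2 >= 0.
   The identity
     1 - |<x, x + c e_j>|^2 / (|x|^2 |x + c e_j|^2)
       = |c|^2 (|x|^2 - |x_j|^2) / (|x|^2 |x + c e_j|^2)
   gives d(y, w) < delta, hence d(Dy, Dw) < r; applied to Dw = Dy + t s_2 e_2 it
   yields delta^2 s_2^2 |y_1|^2 / |y|^2 < 10 r^2 s_1^2, which is the claim since
   sqrt 10 < 4.  Every test vector is real when y is, so the real case follows
   from the same computation after complexification.
   Coordinates are numbered from 1 here and from 0 in the code. *)

From mathcomp Require Import all_boot all_order all_algebra.
From mathcomp Require Import complex.
From mathcomp Require Import ring lra.
Set Implicit Arguments. Unset Strict Implicit. Unset Printing Implicit Defensive.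
Import Order.TTheory GRing.Theory Num.Theory.
Local Open Scope ring_scope.
Local Open Scope complex_scope.

Local Notation Re := complex.Re.
Local Notation Im := complex.Im.
Local Notation normc := ComplexField.Normc.normc.

Section SqrtArith.
Variable R : rcfType.
Implicit Types q e : R.

Lemma sqrtr_le1 q : q <= 1 -> Num.sqrt q <= 1.
Proof. by move=> q1; rewrite -sqrtr1 ler_wsqrtr. Qed.

Lemma sqrtr_lt_sqr q e : 0 < e -> (Num.sqrt q < e) = (q < e ^+ 2).
Proof.
move=> e0; rewrite -[X in _ < X](@ger0_norm _ e) ?ltW // -sqrtr_sqr ltr_sqrt //.
by rewrite exprn_gt0.
Qed.

Lemma ratio_ge_of_sqr_le (q delta r s0 s1 : R) :
  0 < s1 -> 0 <= s0 -> 0 < r -> 0 <= delta -> 0 <= q ->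
  delta ^+ 2 * s1 ^+ 2 * q <= (4 * r * s0) ^+ 2 ->
  delta / (4 * r) * Num.sqrt q <= s0 / s1.
Proof.
move=> s1_gt0 s0_ge0 r_gt0 delta_ge0 q_ge0 hsq.
have -> : delta / (4 * r) * Num.sqrt q = (delta * s1 * Num.sqrt q) / (4 * r) / s1.
  by field; rewrite (gt_eqF s1_gt0) (gt_eqF r_gt0).
rewrite ler_pM2r ?invr_gt0 // ler_pdivrMr ?mulr_gt0 // -ler_sqr ?nnegrE.
- have -> : (delta * s1 * Num.sqrt q) ^+ 2 = delta ^+ 2 * s1 ^+ 2 * q.
    by rewrite !exprMn sqr_sqrtr.
  by rewrite (mulrC s0).
- by rewrite !mulr_ge0 ?sqrtr_ge0 // ltW.
- by rewrite !mulr_ge0 // ltW.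
Qed.

End SqrtArith.

Section SquaredModulus.
Variable R : rcfType.
Implicit Types (z w : R[i]) (t : R).

Definition sqrnormc z : R := Re z ^+ 2 + Im z ^+ 2.

Lemma sqrnormc_ge0 z : 0 <= sqrnormc z.
Proof. by rewrite addr_ge0 ?sqr_ge0. Qed.

Lemma sqrnormc_eq0 z : (sqrnormc z == 0) = (z == 0).
Proof.
case: z => p q; rewrite /sqrnormc paddr_eq0 ?sqr_ge0 // !sqrf_eq0.
by rewrite eq_complex.
Qed.

Lemma Re_sqr_le_sqrnormc z : Re z ^+ 2 <= sqrnormc z.
Proof. by rewrite lerDl sqr_ge0. Qed.

Lemma sqrnormc_real t : sqrnormc t%:C = t ^+ 2.
Proof. by rewrite /sqrnormc /= expr0n addr0. Qed.

Lemma sqrnormcM z w : sqrnormc (z * w) = sqrnormc z * sqrnormc w.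
Proof. by case: z w => [p q] [p' q']; rewrite /sqrnormc /=; ring. Qed.

Lemma sqrnormcD z w : sqrnormc (z + w) = sqrnormc z + 2 * Re (z * conjc w) + sqrnormc w.
Proof. by case: z w => [p q] [p' q']; rewrite /sqrnormc /=; ring. Qed.

Lemma sqrnormcN z : sqrnormc (- z) = sqrnormc z.
Proof. by case: z => p q; rewrite /sqrnormc /= !sqrrN. Qed.

Lemma sqrnormcJ z : sqrnormc (conjc z) = sqrnormc z.
Proof. by case: z => p q; rewrite /sqrnormc /= sqrrN. Qed.

Lemma sqrnormc_realD t z : sqrnormc (t%:C + z) = t ^+ 2 + 2 * t * Re z + sqrnormc z.
Proof. by case: z => p q; rewrite /sqrnormc /=; ring. Qed.

Lemma mulcJ z : z * conjc z = (sqrnormc z)%:C.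
Proof. by case: z => p q; rewrite /sqrnormc /=; congr (_ +i* _); ring. Qed.

Lemma normc_sqr z : normc z ^+ 2 = sqrnormc z.
Proof. by case: z => p q; rewrite /= sqr_sqrtr // addr_ge0 ?sqr_ge0. Qed.

Lemma normc_real t : normc t%:C = `|t|.
Proof. by rewrite /= expr0n /= addr0 sqrtr_sqr. Qed.

End SquaredModulus.

Section ComplexVectors.
Variables (R : rcfType) (d : nat).
Implicit Types (x y : 'cV[R[i]]_d) (k : 'M[R[i]]_d) (c : R[i]) (t : R).
Local Notation e_ j := (delta_mx j 0 : 'cV[R[i]]_d).

Definition sqrnorm x : R := \sum_(i < d) sqrnormc (x i 0).

Lemma sqrnorm_ge0 x : 0 <= sqrnorm x.
Proof. by apply: sumr_ge0 => i _; apply: sqrnormc_ge0. Qed.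

Lemma sqrnorm0 : sqrnorm 0 = 0.
Proof. by rewrite /sqrnorm big1 // => i _; rewrite mxE sqrnormc_real expr0n. Qed.

Lemma sqrnorm_gt0 x : (0 < sqrnorm x) = (x != 0).
Proof.
rewrite lt_def sqrnorm_ge0 andbT; congr negb.
apply/eqP/eqP => [x0|->]; last exact: sqrnorm0.
apply/matrixP => i j; rewrite (ord1 j) mxE; apply/eqP; rewrite -sqrnormc_eq0.
apply/eqP; move: i isT; apply/psumr_eq0P => // i _; exact: sqrnormc_ge0.
Qed.

Lemma sqrnorm_le_coord x j : sqrnormc (x j 0) <= sqrnorm x.
Proof.
by rewrite /sqrnorm (bigD1 j) //= lerDl sumr_ge0 // => i _; apply: sqrnormc_ge0.
Qed.

Lemma ipC_self x : ipC x x = (sqrnorm x)%:C.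
Proof. by rewrite /ipC /sqrnorm rmorph_sum; apply: eq_bigr => i _; rewrite mulcJ. Qed.

Lemma normc_ipC_self x : normc (ipC x x) = sqrnorm x.
Proof. by rewrite ipC_self normc_real ger0_norm ?sqrnorm_ge0. Qed.

Lemma ipCDr x y1 y2 : ipC x (y1 + y2) = ipC x y1 + ipC x y2.
Proof. by rewrite /ipC -big_split; apply: eq_bigr => i _; rewrite mxE rmorphD mulrDr. Qed.

Lemma ipCZr x y c : ipC x (c *: y) = conjc c * ipC x y.
Proof. by rewrite /ipC mulr_sumr; apply: eq_bigr => i _; rewrite mxE rmorphM mulrCA. Qed.

Lemma ipC_delta x j : ipC x (e_ j) = x j 0.
Proof.
rewrite /ipC (bigD1 j) // big1 => [|i /negbTE ij]; rewrite mxE ?ij conjc_nat.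
  by rewrite !eqxx mulr1 /= addr0.
by rewrite /= mulr0.
Qed.

Lemma e1C_delta (j : 'I_d) : j = 0%N :> nat -> e1C R d = e_ j.
Proof.
by move=> j0; apply/matrixP => i l; rewrite (ord1 l) !mxE -val_eqE /= j0 andbT.
Qed.

Lemma ipC_unitary k x y : unitaryC k -> ipC (k *m x) (k *m y) = ipC x y.
Proof.
have ipC_mx x' y' : ipC x' y' = ((map_mx conjc y')^T *m x') 0 0.
  by rewrite mxE; apply: eq_bigr => i _; rewrite !mxE mulrC.
by move=> kU; rewrite !ipC_mx map_mxM trmx_mul -mulmxA (mulmxA _ k) kU mul1mx.
Qed.

Lemma dPC_unitary k x y : unitaryC k -> dPC (k *m x) (k *m y) = dPC x y.
Proof. by move=> kU; rewrite /dPC !ipC_unitary. Qed.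

Lemma dPC_le1 x y : dPC x y <= 1.
Proof.
apply: sqrtr_le1.
by rewrite gerBl divr_ge0 ?sqr_ge0 // mulr_ge0 // normc_ipC_self sqrnorm_ge0.
Qed.

Lemma sqrnorm_add_delta x c j :
  sqrnorm (x + c *: e_ j) = sqrnorm x + 2 * Re (x j 0 * conjc c) + sqrnormc c.
Proof.
have others : \sum_(i | i != j) sqrnormc ((x + c *: e_ j) i 0) =
              \sum_(i | i != j) sqrnormc (x i 0).
  by apply: eq_bigr => i /negbTE ij; rewrite !mxE ij /= mulr0 addr0.
rewrite /sqrnorm (bigD1 j) // [in RHS](bigD1 j) //= others !mxE !eqxx /= mulr1.
by rewrite sqrnormcD; ring.
Qed.

Lemma sqrnorm_add_real_delta x t j :
  sqrnorm (x + t%:C *: e_ j) = sqrnorm x + 2 * t * Re (x j 0) + t ^+ 2.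
Proof.
rewrite sqrnorm_add_delta conjc_real sqrnormc_real.
by case: (x j 0) => p q /=; ring.
Qed.

Lemma sqrnorm_sub_coord x j :
  sqrnorm (x - x j 0 *: e_ j) = sqrnorm x - sqrnormc (x j 0).
Proof.
rewrite -scaleNr sqrnorm_add_delta rmorphN mulrN mulcJ sqrnormcN /=; ring.
Qed.

Lemma dPC_add_delta x c j : x != 0 -> x + c *: e_ j != 0 ->
  dPC x (x + c *: e_ j) = Num.sqrt (sqrnormc c * (sqrnorm x - sqrnormc (x j 0)) /
                                    (sqrnorm x * sqrnorm (x + c *: e_ j))).
Proof.
rewrite -!sqrnorm_gt0 => N_gt0 Z_gt0.
have NZ_neq0 : sqrnorm x * sqrnorm (x + c *: e_ j) != 0.
  by rewrite mulf_neq0 // lt0r_neq0.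
rewrite /dPC !normc_ipC_self ipCDr ipCZr ipC_delta ipC_self normc_sqr.
rewrite -[1](divff NZ_neq0) -mulrBl sqrnormc_realD sqrnormcM sqrnormcJ.
rewrite [in X in X - _]sqrnorm_add_delta; congr (Num.sqrt (_ / _)).
by rewrite [conjc c * _]mulrC; ring.
Qed.

End ComplexVectors.

Section DiagonalScaling.
Variables (R : rcfType) (d : nat) (s : nat -> R).
Implicit Types (x : 'cV[R[i]]_d).
Local Notation e_ j := (delta_mx j 0 : 'cV[R[i]]_d).
Local Notation D := (diagC d s).

Lemma diagC_coord x i : (D *m x) i 0 = (s i)%:C * x i 0.
Proof. by rewrite /diagC mul_diag_mx !mxE. Qed.

Lemma diagC_delta j : D *m e_ j = (s j)%:C *: e_ j.
Proof.
apply/matrixP => i l; rewrite (ord1 l) diagC_coord !mxE.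
by case: eqVneq => [->|_] /=; rewrite ?mulr0.
Qed.

Lemma sqrnorm_diagC x : sqrnorm (D *m x) = \sum_(i < d) s i ^+ 2 * sqrnormc (x i 0).
Proof. by apply: eq_bigr => i _; rewrite diagC_coord sqrnormcM sqrnormc_real. Qed.

Hypothesis s_gt0 : forall i, (i < d)%N -> 0 < s i.
Hypothesis s_nonincr : forall i j, (i <= j)%N -> (j < d)%N -> s j <= s i.

Lemma sqrnorm_diagC_le x : sqrnorm (D *m x) <= s 0%N ^+ 2 * sqrnorm x.
Proof.
rewrite sqrnorm_diagC /sqrnorm mulr_sumr; apply: ler_sum => i _.
have d_gt0 : (0 < d)%N by apply: leq_ltn_trans (ltn_ord i).
rewrite ler_wpM2r ?sqrnormc_ge0 // ler_sqr ?nnegrE; first exact: s_nonincr.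
all: exact/ltW/s_gt0.
Qed.

Lemma diagC_mul_eq0 x : (D *m x == 0) = (x == 0).
Proof.
apply/eqP/eqP => [/matrixP Dx0 | ->]; last exact: mulmx0.
apply/matrixP => i j; rewrite (ord1 j); move: (Dx0 i 0).
rewrite diagC_coord !mxE => /eqP.
by rewrite mulf_eq0 fmorph_eq0 (gt_eqF (s_gt0 (ltn_ord i))) => /eqP.
Qed.

End DiagonalScaling.

Section LeadingCoordinates.
Variables (R : rcfType) (d : nat) (s : nat -> R).
Hypothesis d_gt1 : (1 < d)%N.
Hypothesis s_gt0 : forall i, (i < d)%N -> 0 < s i.
Hypothesis s_nonincr : forall i j, (i <= j)%N -> (j < d)%N -> s j <= s i.
Let i0 : 'I_d := Ordinal (ltnW d_gt1).
Let i1 : 'I_d := Ordinal d_gt1.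
Local Notation e_ j := (delta_mx j 0 : 'cV[R[i]]_d).
Local Notation D := (diagC d s).

Lemma sqrnorm_diagC_ge (x : 'cV[R[i]]_d) :
  s 0%N ^+ 2 * sqrnormc (x i0 0) + s 1%N ^+ 2 * sqrnormc (x i1 0) <= sqrnorm (D *m x).
Proof.
rewrite sqrnorm_diagC (bigD1 i0) // (bigD1 i1) //= addrA lerDl.
by apply: sumr_ge0 => i _; rewrite mulr_ge0 ?sqr_ge0 ?sqrnormc_ge0.
Qed.

Variable y : 'cV[R[i]]_d.
Hypothesis y_neq0 : y != 0.
Local Notation N := (sqrnorm y).
Local Notation a := (sqrnormc (y i0 0)).

Lemma dist_coord_hyperplane_le m : m <= 1 ->
  (y - y i0 0 *: e_ i0 != 0 -> m <= dPC y (y - y i0 0 *: e_ i0)) ->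
  m <= Num.sqrt (a / N).
Proof.
move=> m_le1 m_le_dist.
have N_gt0 : 0 < N by rewrite sqrnorm_gt0.
have [y'0 | y'_neq0] := eqVneq (y - y i0 0 *: e_ i0) 0.
  move: (sqrnorm_sub_coord y i0); rewrite y'0 sqrnorm0 => /eqP; rewrite eq_sym subr_eq0.
  by move=> /eqP <-; rewrite divff ?lt0r_neq0 // sqrtr1.
move: (m_le_dist y'_neq0) (y'_neq0); rewrite -sqrnorm_gt0 sqrnorm_sub_coord subr_gt0.
rewrite -scaleNr dPC_add_delta ?scaleNr // sqrnorm_sub_coord sqrnormcN => m_le a_lt_N.
by move: m_le; rewrite invfM mulrACA divff ?mulr1 // subr_eq0 gt_eqF.
Qed.

Section Perturbation.
Variables delta r : R.
Hypotheses (delta_gt0 : 0 < delta) (delta_lt1 : delta < 1) (r_gt0 : 0 < r).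
Local Notation b := (sqrnormc (y i1 0)).
Local Notation rho := (Re (y i1 0)).

Let tau := if 0 <= rho then delta / 2 * Num.sqrt N else - (delta / 2 * Num.sqrt N).
Let w := y + tau%:C *: e_ i1.

Lemma perturbation_cross_ge0 : 0 <= tau * rho.
Proof.
have t_ge0 : 0 <= delta / 2 * Num.sqrt N by rewrite mulr_ge0 ?sqrtr_ge0 ?divr_ge0 ?ltW.
rewrite /tau; case: ifP => [rho_ge0 | /negbT]; first exact: mulr_ge0.
by rewrite -ltNge mulNr -mulrN => /ltW rho_le0; rewrite mulr_ge0 ?oppr_ge0.
Qed.

Lemma perturbation_sqr : tau ^+ 2 = delta ^+ 2 * N / 4.
Proof.
have -> : tau ^+ 2 = (delta / 2 * Num.sqrt N) ^+ 2.
  by rewrite /tau; case: ifP; rewrite ?sqrrN.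
by rewrite exprMn sqr_sqrtr ?sqrnorm_ge0 //; field.
Qed.

Lemma sqrnorm_perturbation : N <= sqrnorm w <= 5 / 2 * N.
Proof.
have tau_rho := perturbation_cross_ge0; have tau2 := perturbation_sqr.
have rho2_le_N : rho ^+ 2 <= N := le_trans (Re_sqr_le_sqrnormc _) (sqrnorm_le_coord _ _).
have delta2_le1 : delta ^+ 2 <= 1 by rewrite expr_le1 ?ltW.
have tau2_le : tau ^+ 2 <= N / 4.
  have : delta ^+ 2 * N <= N by rewrite ler_piMl ?sqrnorm_ge0.
  by rewrite tau2; lra.
have cross_le : 2 * (tau * rho) <= tau ^+ 2 + rho ^+ 2.
  by rewrite -subr_ge0 (_ : _ - _ = (tau - rho) ^+ 2) ?sqr_ge0 //; ring.
rewrite sqrnorm_add_real_delta -mulrA; apply/andP; split; nra.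
Qed.

Lemma dPC_perturbation_lt : dPC y w < delta.
Proof.
have N_gt0 : 0 < N by rewrite sqrnorm_gt0.
have /andP[N_le_Z _] := sqrnorm_perturbation.
have Z_gt0 := lt_le_trans N_gt0 N_le_Z.
have delta2_gt0 : 0 < delta ^+ 2 by rewrite exprn_gt0.
have frac_le : (N - b) / (N * sqrnorm w) <= N^-1.
  rewrite ler_pdivrMr ?mulr_gt0 // mulKf ?lt0r_neq0 //.
  by have := sqrnormc_ge0 (y i1 0); lra.
rewrite dPC_add_delta -?sqrnorm_gt0 // -/w sqrtr_lt_sqr // sqrnormc_real perturbation_sqr.
rewrite -mulrA; apply: (le_lt_trans (ler_wpM2l _ frac_le)).
  by rewrite divr_ge0 ?mulr_ge0 ?ltW.
by rewrite mulrAC mulfK ?lt0r_neq0 //; lra.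
Qed.

Lemma diag_singular_ratio_ge :
  (forall t : R, y + t%:C *: e_ i1 != 0 -> dPC y (y + t%:C *: e_ i1) < delta ->
                 dPC (D *m y) (D *m (y + t%:C *: e_ i1)) < r) ->
  delta / (4 * r) * Num.sqrt (a / N) <= s 0%N / s 1%N.
Proof.
have N_gt0 : 0 < N by rewrite sqrnorm_gt0.
have /andP[N_le_Z Z_le] := sqrnorm_perturbation.
have w_neq0 : w != 0 by rewrite -sqrnorm_gt0 (lt_le_trans N_gt0).
move=> /(_ tau w_neq0 dPC_perturbation_lt); rewrite -/w.
have s1_gt0 : 0 < s 1%N := s_gt0 d_gt1.
have s0_gt0 : 0 < s 0%N := s_gt0 (ltnW d_gt1).
have Dw : D *m w = D *m y + (tau * s 1%N)%:C *: e_ i1.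
  by rewrite mulmxDr -scalemxAr diagC_delta scalerA -rmorphM mulrC.
rewrite [in X in X < r]Dw dPC_add_delta ?diagC_mul_eq0 -?Dw ?diagC_mul_eq0 //.
rewrite sqrtr_lt_sqr // sqrnormc_real diagC_coord sqrnormcM sqrnormc_real.
rewrite (_ : s i1 = s 1%N) //.
set N' := sqrnorm (D *m y); set Z' := sqrnorm (D *m w) => hr.
have N'_lo : s 0%N ^+ 2 * a + s 1%N ^+ 2 * b <= N' := sqrnorm_diagC_ge y.
have N'_hi : N' <= s 0%N ^+ 2 * N := sqrnorm_diagC_le s_gt0 s_nonincr y.
have Z'_hi : Z' <= s 0%N ^+ 2 * (5 / 2 * N).
  by apply: le_trans (sqrnorm_diagC_le s_gt0 s_nonincr w) _; rewrite ler_wpM2l ?sqr_ge0.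
have N'_gt0 : 0 < N' by rewrite sqrnorm_gt0 diagC_mul_eq0.
have Z'_gt0 : 0 < Z' by rewrite sqrnorm_gt0 diagC_mul_eq0.
have a_ge0 := sqrnormc_ge0 (y i0 0).
apply: (ratio_ge_of_sqr_le s1_gt0 (ltW s0_gt0) r_gt0 (ltW delta_gt0)).
  by rewrite divr_ge0 ?sqrnorm_ge0.
have key : delta ^+ 2 * s 1%N ^+ 2 * (a / N) / (10 * s 0%N ^+ 2) < r ^+ 2.
  apply: le_lt_trans hr.
  have -> : delta ^+ 2 * s 1%N ^+ 2 * (a / N) / (10 * s 0%N ^+ 2) =
      (tau * s 1%N) ^+ 2 * (s 0%N ^+ 2 * a) /
      (s 0%N ^+ 2 * N * (s 0%N ^+ 2 * (5 / 2 * N))).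
    by rewrite exprMn perturbation_sqr; field; rewrite !lt0r_neq0.
  have den_gt0 : 0 < s 0%N ^+ 2 * N * (s 0%N ^+ 2 * (5 / 2 * N)).
    by rewrite !mulr_gt0 ?exprn_gt0 ?invr_gt0.
  apply: ler_pM.
  - exact: mulr_ge0 (sqr_ge0 _) (mulr_ge0 (sqr_ge0 _) a_ge0).
  - by rewrite invr_ge0; apply: ltW.
  - by rewrite ler_wpM2l ?sqr_ge0 //; lra.
  - rewrite lef_pV2 ?posrE // ?mulr_gt0 //.
    exact: ler_pM (ltW N'_gt0) (ltW Z'_gt0) N'_hi Z'_hi.
rewrite ltr_pdivrMr ?mulr_gt0 ?exprn_gt0 // in key.
have : 0 <= r ^+ 2 * s 0%N ^+ 2 by rewrite mulr_ge0 ?sqr_ge0.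
rewrite !exprMn; lra.
Qed.

End Perturbation.

End LeadingCoordinates.

Section UnitaryFrame.
Variables (R : rcfType) (d : nat) (s : nat -> R) (k k' : 'M[R[i]]_d).
Hypothesis d_gt1 : (1 < d)%N.
Hypothesis s_gt0 : forall i, (i < d)%N -> 0 < s i.
Hypothesis s_nonincr : forall i j, (i <= j)%N -> (j < d)%N -> s j <= s i.
Hypotheses (k_unitary : unitaryC k) (k'_unitary : unitaryC k').
Let i0 : 'I_d := Ordinal (ltnW d_gt1).
Let i1 : 'I_d := Ordinal d_gt1.
Local Notation e_ j := (delta_mx j 0 : 'cV[R[i]]_d).
Local Notation k'H := (map_mx conjc k')^T.
Local Notation g := (k *m diagC d s *m k').
Implicit Types w : 'cV[R[i]]_d.

Lemma unitary_adjK w : k' *m (k'H *m w) = w.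
Proof. by rewrite mulmxA mulmx1C ?mul1mx. Qed.

Lemma unitary_adj_eq0 w : (k'H *m w == 0) = (w == 0).
Proof.
apply/eqP/eqP => [w0 | ->]; last exact: mulmx0.
by rewrite -[w]unitary_adjK w0 mulmx0.
Qed.

Variable u : 'cV[R[i]]_d.
Hypothesis u_neq0 : u != 0.
Local Notation y := (k' *m u).

Lemma unitary_frame_dist w : dPC u (k'H *m w) = dPC y w.
Proof. by rewrite -(dPC_unitary _ _ k'_unitary) unitary_adjK. Qed.

Lemma unitary_frame_image w :
  dPC (g *m u) (g *m (k'H *m w)) = dPC (diagC d s *m y) (diagC d s *m w).
Proof. by rewrite -!mulmxA unitary_adjK !mulmxA -!(mulmxA k) dPC_unitary. Qed.

Lemma unitary_frame_singular_ratio_ge delta r m :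
  0 < delta < 1 -> 0 < r -> m <= 1 ->
  (y - y i0 0 *: e_ i0 != 0 -> m <= dPC u (k'H *m (y - y i0 0 *: e_ i0))) ->
  (forall t : R, y + t%:C *: e_ i1 != 0 ->
     dPC u (k'H *m (y + t%:C *: e_ i1)) < delta ->
     dPC (g *m u) (g *m (k'H *m (y + t%:C *: e_ i1))) < r) ->
  delta / (4 * r) * m <= s 0%N / s 1%N.
Proof.
move=> /andP[delta_gt0 delta_lt1] r_gt0 m_le1 m_le_dist hball.
have y_neq0 : y != 0.
  by apply: contra u_neq0 => /eqP y0; rewrite -[u]mul1mx -k'_unitary -mulmxA y0 mulmx0.
have ratio_ge0 : 0 <= delta / (4 * r).
  exact: divr_ge0 (ltW delta_gt0) (mulr_ge0 (ler0n _ 4) (ltW r_gt0)).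
apply: le_trans (diag_singular_ratio_ge (d_gt1 := d_gt1) s_gt0 s_nonincr y_neq0
                   delta_gt0 delta_lt1 r_gt0 _).
  rewrite ler_wpM2l //; apply: dist_coord_hyperplane_le => // y'_neq0.
  by rewrite -unitary_frame_dist m_le_dist.
by move=> t w_neq0; rewrite -unitary_frame_dist -unitary_frame_image; apply: hball.
Qed.

End UnitaryFrame.

Lemma singular_ratio_geC (R : rcfType) (d : nat) (k k' : 'M[R[i]]_d) (s : nat -> R)
    (u : 'cV[R[i]]_d) (delta r m : R) :
  (1 < d)%N -> unitaryC k -> unitaryC k' ->
  (forall i, (i < d)%N -> 0 < s i) ->
  (forall i j, (i <= j)%N -> (j < d)%N -> s j <= s i) ->
  u != 0 -> 0 < delta < 1 -> 0 < r ->
  (forall v, v != 0 -> dPC u v < delta ->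
     dPC (k *m diagC d s *m k' *m u) (k *m diagC d s *m k' *m v) < r) ->
  is_dist_hypC k' u m ->
  delta / (4 * r) * m <= s 0%N / s 1%N.
Proof.
move=> d_gt1 kU k'U s_gt0 s_nonincr u_neq0 delta_bounds r_gt0 hball.
move=> [[w0 [_ _ <-]] hdist].
apply: (unitary_frame_singular_ratio_ge (d_gt1 := d_gt1) _ _ kU k'U u_neq0) => //.
- exact: dPC_le1.
- move=> y'_neq0; apply: hdist; first by rewrite unitary_adj_eq0.
  rewrite unitary_adjK // (@e1C_delta _ _ (Ordinal (ltnW d_gt1))) //.
  by rewrite ipC_delta !mxE eqxx mulr1 subrr.
- by move=> t w_neq0 /hball; apply; rewrite unitary_adj_eq0.
Qed.

Section RealToComplex.
Variables (R : rcfType) (d : nat).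
Implicit Types (x y : 'cV[R]_d) (A : 'M[R]_d).
Local Notation lift A := (map_mx (real_complex R) A).

Lemma ipC_lift x y : ipC (lift x) (lift y) = (ipR x y)%:C.
Proof.
by rewrite /ipR rmorph_sum; apply: eq_bigr => i _; rewrite !mxE conjc_real rmorphM.
Qed.

Lemma dPC_lift x y : dPC (lift x) (lift y) = dPR x y.
Proof.
have ipR_self (z : 'cV[R]_d) : ipR z z = sqrnorm (lift z).
  by apply: complexI; rewrite -ipC_self ipC_lift.
by rewrite /dPC /dPR ipC_lift normc_sqr sqrnormc_real !normc_ipC_self -!ipR_self.
Qed.

Lemma conjc_lift A : map_mx conjc (lift A) = lift A.
Proof. by apply/matrixP => i j; rewrite !mxE conjc_real. Qed.

Lemma unitaryC_lift A : orthoR A -> unitaryC (lift A).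
Proof. by move=> AO; rewrite /unitaryC conjc_lift map_trmx -map_mxM AO map_mx1. Qed.

Lemma diagC_lift (s : nat -> R) : lift (diagR d s) = diagC d s.
Proof. by rewrite map_diag_mx; congr diag_mx; apply/matrixP => i j; rewrite !mxE. Qed.

Lemma e1C_lift : lift (e1R R d) = e1C R d.
Proof. by apply/matrixP => i j; rewrite !mxE rmorph_nat. Qed.

Lemma singular_ratio_geR (k k' : 'M[R]_d) (s : nat -> R) (u : 'cV[R]_d) (delta r m : R) :
  (1 < d)%N -> orthoR k -> orthoR k' ->
  (forall i, (i < d)%N -> 0 < s i) ->
  (forall i j, (i <= j)%N -> (j < d)%N -> s j <= s i) ->
  u != 0 -> 0 < delta < 1 -> 0 < r ->
  (forall v, v != 0 -> dPR u v < delta ->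
     dPR (k *m diagR d s *m k' *m u) (k *m diagR d s *m k' *m v) < r) ->
  is_dist_hypR k' u m ->
  delta / (4 * r) * m <= s 0%N / s 1%N.
Proof.
move=> d_gt1 kO k'O s_gt0 s_nonincr u_neq0 delta_bounds r_gt0 hball.
move=> [[w0 [_ _ <-]] hdist].
pose i0 : 'I_d := Ordinal (ltnW d_gt1).
have k'_adjK x : k' *m (k'^T *m x) = x by rewrite mulmxA mulmx1C ?mul1mx.
have k'_adj_eq0 x : (k'^T *m x == 0) = (x == 0).
  by apply/eqP/eqP => [x0|->]; [rewrite -[x]k'_adjK x0 mulmx0 | rewrite mulmx0].
have lift_adj x : (map_mx conjc (lift k'))^T *m lift x = lift (k'^T *m x).
  by rewrite conjc_lift map_trmx map_mxM.
have lift_frame : lift k' *m lift u = lift (k' *m u) by rewrite map_mxM.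
have lift_sub_coord x j :
    lift x - lift x j 0 *: delta_mx j 0 = lift (x - x j 0 *: delta_mx j 0).
  by rewrite map_mxB map_mxZ map_delta_mx mxE.
have lift_add_delta x (t : R) j :
    lift x + t%:C *: delta_mx j 0 = lift (x + t *: delta_mx j 0).
  by rewrite map_mxD map_mxZ map_delta_mx.
have lift_g x :
    lift k *m diagC d s *m lift k' *m lift x = lift (k *m diagR d s *m k' *m x).
  by rewrite -diagC_lift !map_mxM.
apply: (unitary_frame_singular_ratio_ge (d_gt1 := d_gt1) s_gt0 s_nonincr
          (unitaryC_lift kO) (unitaryC_lift k'O) (u := lift u)) => //.
- by rewrite map_mx_eq0.
- by rewrite -dPC_lift dPC_le1.
- rewrite lift_frame lift_sub_coord map_mx_eq0 lift_adj dPC_lift => y'_neq0.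
  apply: hdist; first by rewrite k'_adj_eq0.
  apply: complexI; rewrite k'_adjK -ipC_lift e1C_lift (@e1C_delta _ _ i0) //.
  by rewrite ipC_delta !mxE eqxx mulr1 subrr.
- move=> t; rewrite lift_frame lift_add_delta map_mx_eq0 lift_adj !lift_g !dPC_lift.
  by move=> w_neq0; apply: hball; rewrite k'_adj_eq0.
Qed.

End RealToComplex.

Theorem lemma2p2 (R : rcfType) :
  (* K = R *)
  (forall (d : nat) (g k k' : 'M[R]_d) (s : nat -> R) (u : 'cV[R]_d)
          (delta r m : R),
      (1 < d)%N ->
      g \in unitmx ->
      orthoR k -> orthoR k' ->
      (forall i, (i < d)%N -> 0 < s i) ->
      (forall i j, (i <= j)%N -> (j < d)%N -> s j <= s i) ->
      g = k *m diagR d s *m k' ->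
      u != 0 ->
      0 < delta < 1 -> 0 < r < 1 ->
      (forall v : 'cV[R]_d, v != 0 -> dPR u v < delta ->
         dPR (g *m u) (g *m v) < r) ->
      is_dist_hypR k' u m ->
      s 0%N / s 1%N >= delta / (4 * r) * m) /\
  (* K = C *)
  (forall (d : nat) (g k k' : 'M[R[i]]_d) (s : nat -> R) (u : 'cV[R[i]]_d)
          (delta r m : R),
      (1 < d)%N ->
      g \in unitmx ->
      unitaryC k -> unitaryC k' ->
      (forall i, (i < d)%N -> 0 < s i) ->
      (forall i j, (i <= j)%N -> (j < d)%N -> s j <= s i) ->
      g = k *m diagC d s *m k' ->
      u != 0 ->
      0 < delta < 1 -> 0 < r < 1 ->
      (forall v : 'cV[R[i]]_d, v != 0 -> dPC u v < delta ->
         dPC (g *m u) (g *m v) < r) ->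
      is_dist_hypC k' u m ->
      s 0%N / s 1%N >= delta / (4 * r) * m).
Proof.
split=> d g k k' s u delta r m d_gt1 _ kK k'K s_gt0 s_nonincr -> u_neq0 delta_bounds
        /andP[r_gt0 _].
- exact: singular_ratio_geR d_gt1 kK k'K s_gt0 s_nonincr u_neq0 delta_bounds r_gt0.
- exact: singular_ratio_geC d_gt1 kK k'K s_gt0 s_nonincr u_neq0 delta_bounds r_gt0.
Qed.
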